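(* Let $t$ be a positive integer and let $G_t$ be the labeling of the complete graph $K_{2t}$ in which the edges of a fixed perfect matching ($t$ pairwise disjoint edges) are labeled $-$ and all other edges are labeled $+$. If $\mathcal{C}$ is a clustering (partition of the vertex set) of $G_t$ with more than one cluster, then some vertex of $G_t$ has at least $t-1$ errors in $\mathcal{C}$.
   Context: An error at a vertex $v$ in a clustering is an edge incident to $v$ that is either a $+$ edge whose endpoints lie in different clusters or a $-$ edge whose endpoints lie in the same cluster. *)

From mathcomp Require Import all_boot.
Set Implicit Arguments. Unset Strict Implicit. Unset Printing Implicit Defensive.

(* A perfect matching on the vertex set T is encoded by a fixed-point-free
   involution m : T -> T; its edges are the pairs {x, m x}. *)
Definition perfect_matching (T : finType) (m : T -> T) : Prop :=
  (forall x, m (m x) = x) /\ (forall x, m x != x).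

Definition minus_edge (T : finType) (m : T -> T) (u v : T) : bool :=
  (u != v) && (v == m u).
Definition plus_edge (T : finType) (m : T -> T) (u v : T) : bool :=
  (u != v) && (v != m u).

Definition errors (T : finType) (m : T -> T) (P : {set {set T}}) (v : T) : nat :=
  #|[set u | (plus_edge m v u && (pblock P u != pblock P v))
           || (minus_edge m v u && (pblock P u == pblock P v))]|.

From mathcomp Require Import all_boot.
From mathcomp Require Import zify.
Set Implicit Arguments. Unset Strict Implicit. Unset Printing Implicit Defensive.

(* A vertex v is joined by a + edge to every vertex outside its cluster except
   its partner m v, and each of these edges is an error; so v has at least
   #|T| - #|cluster of v| - 1 errors.  With two or more clusters, some cluster
   has at most half of the 2t vertices, and any vertex in it has t - 1 errors. *)

Lemma errors_ge_outside_pblock (T : finType) (m : T -> T) (P : {set {set T}}) :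
  partition P [set: T] -> forall v, #|T| - #|pblock P v| - 1 <= errors m P v.
Proof.
move=> partP v; have [/eqP coverP _ _] := and3P partP.
have v_own : v \in pblock P v by rewrite mem_pblock coverP inE.
have outside_sub : (~: pblock P v) :\ m v \subset
    [set u | (plus_edge m v u && (pblock P u != pblock P v))
          || (minus_edge m v u && (pblock P u == pblock P v))].
  apply/subsetP => u; rewrite !inE => /andP[u_mv u_out]; apply/orP; left.
  have u_v : v != u by apply: contraNneq u_out => <-.
  rewrite /plus_edge u_v u_mv /=; apply: contraNneq u_out => <-.
  by rewrite mem_pblock coverP inE.
have := subset_leq_card outside_sub; rewrite /errors.
have := cardsD1 (m v) (~: pblock P v); have := cardsC (pblock P v).
case: (m v \in _) => /=; lia.
Qed.

Lemma exists_small_pblock (T : finType) (P : {set {set T}}) :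
  partition P [set: T] -> 1 < #|P| -> exists v : T, 2 * #|pblock P v| <= #|T|.
Proof.
move=> partP /card_gt1P[A [B [AP BP AB]]].
have [_ trivP P_no0] := and3P partP.
have disjAB : [disjoint A & B] by move/trivIsetP: trivP; apply.
have cardAB : #|A| + #|B| <= #|T|.
  have /eqP <- : #|A :|: B| == #|A| + #|B| by rewrite (leq_card_setU A B).2.
  exact: max_card.
have block_of C : C \in P -> exists v, pblock P v = C.
  move=> CP; have [v vC] : exists v, v \in C.
    by apply/set0Pn; apply: contraNneq P_no0 => <-.
  by exists v; apply: def_pblock.
have [leA | ltB] := leqP #|A| #|B|.
  by have [v vA] := block_of A AP; exists v; rewrite vA; lia.
by have [v vB] := block_of B BP; exists v; rewrite vB; lia.
Qed.

Theorem lemma1 (t : nat) (T : finType) (m : T -> T) (P : {set {set T}}) :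
  0 < t -> #|T| = 2 * t -> perfect_matching m ->
  partition P [set: T] -> 1 < #|P| ->
  exists v : T, t.-1 <= errors m P v.
Proof.
move=> _ cardT _ partP manyP.
have [v small_v] := exists_small_pblock partP manyP.
exists v; have := errors_ge_outside_pblock m partP v; lia.
Qed.
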